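(* Fix an activity $\lambda>0$. For every $\epsilon>0$ and every integer $\Delta\geq 1$ there exists $\overline{h}(\epsilon,\Delta)$ such that for every finite graph $G$ of maximum degree at most $\Delta$, every vertex $v$ of $G$, and every $h\geq \overline{h}(\epsilon,\Delta)$, $$|\log x_v^{h}(v)-\log p_{G,\lambda}(v)|\leq \epsilon .$$ Moreover $\overline{h}(\epsilon,\Delta)=\tilde{O}\left(\sqrt{\Delta}\log(1/\epsilon)\right)$ and $$\lim_{\Delta\to \infty}\frac{1}{\sqrt{\Delta}} \lim_{\epsilon\to 0}\frac{\overline{h}(\epsilon,\Delta)}{\log (1/\epsilon)} = \sqrt{\lambda}.$$
   Context: Let $G=(V,E)$ be a finite undirected graph (parallel edges and self-loops allowed) and let $\mathbb{M}$ be its set of matchings (sets of edges no two sharing an endpoint). For $\lambda>0$ the partition function is $Z(G,\lambda)=\sum_{M\in\mathbb{M}}\lambda^{|M|}$, the Gibbs distribution is $\pi_{G,\lambda}(M)=\lambda^{|M|}/Z(G,\lambda)$, and $p_{G,\lambda}(v)=\sum_{M\in\mathbb{M},\,M\text{ does not cover }v}\pi_{G,\lambda}(M)$ is the probability that $v$ is not covered. The path-tree $T_G(v)$ is the rooted tree whose nodes are the finite simple paths $v_0v_1\dots v_k$ ($k\ge 0$, distinct vertices, consecutive ones adjacent) with $v_0=v$, whose edges join $v_0\dots v_k$ to $v_0\dots v_kv_{k+1}$, and whose root is the one-vertex path $v$. For $h\geq 1$, $T_G^h(v)$ is the path-tree truncated at depth $h$, and ${\bf x}^h(v)=(x^h_u(v))_{u\in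 T^h_G(v)}$ is the unique solution of $x_u(v)=\bigl(1+\lambda\sum_{w\text{ child of }u\text{ in }T^h_G(v)}x_w(v)\bigr)^{-1}$ for all nodes $u$ (empty sum $=0$); $x^h_v(v)$ denotes its value at the root. $\tilde{O}$ hides polylogarithmic factors; the limit in $\epsilon$ is taken first with $\Delta$ fixed. *)

From HB Require Import structures.
From mathcomp Require Import all_boot all_order all_algebra.
From mathcomp Require Import all_classical all_reals all_analysis.
Set Implicit Arguments. Unset Strict Implicit. Unset Printing Implicit Defensive.
Import Order.TTheory GRing.Theory Num.Theory.
Local Open Scope ring_scope.

(* A finite undirected multigraph (parallel edges and self-loops allowed):
   vertex type V, edge type E, each edge e has an (unordered) pair of
   endpoints [ends e]; a self-loop has both endpoints equal. *)
Section Graph.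
Variables (V E : finType) (ends : E -> V * V).

Definition incident (e : E) (u : V) : bool := ((ends e).1 == u) || ((ends e).2 == u).

Definition is_loop (e : E) : bool := (ends e).1 == (ends e).2.

(* degree: number of edge-ends at u (a self-loop counts twice) *)
Definition degree (u : V) : nat :=
  (#|[set e | (ends e).1 == u]| + #|[set e | (ends e).2 == u]|)%N.

Definition max_degree_le (D : nat) : Prop := forall u : V, (degree u <= D)%N.

Definition matching (M : {set E}) : bool :=
  [forall e in M, ~~ is_loop e] &&
  [forall e in M, forall f in M, (e != f) ==>
     ~~ [exists u, incident e u && incident f u]].

Definition covers (M : {set E}) (v : V) : bool := [exists e in M, incident e v].

Variable R : realType.

Definition Zpart (lambda : R) : R :=
  \sum_(M : {set E} | matching M) lambda ^+ #|M|.

Definition p_uncov (lambda : R) (v : V) : R :=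
  (\sum_(M : {set E} | matching M && ~~ covers M v) lambda ^+ #|M|) / Zpart lambda.

Definition step (e : E) (u w : V) : bool :=
  (((ends e).1 == u) && ((ends e).2 == w)) || (((ends e).2 == u) && ((ends e).1 == w)).

(* A node of the path-tree
   is a simple path from the root; it is determined for the recursion by its
   last vertex u and its vertex set S, and its children are the one-step
   extensions along an edge e from u to a vertex w not in S (one child per
   edge, so parallel edges give distinct children).  [xrec d u S] is the value
   x_u at a node whose subtree in the truncated tree has depth d (leaves: d = 0,
   empty sum, value 1). *)
Fixpoint xrec (lambda : R) (d : nat) (u : V) (S : {set V}) {struct d} : R :=
  match d with
  | 0 => 1
  | d'.+1 =>
      (1 + lambda * \sum_(e : E) \sum_(w : V | step e u w && (w \notin S))
                      xrec lambda d' w (w |: S))^-1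
  end.

Definition x_root (lambda : R) (h : nat) (v : V) : R := xrec lambda h v [set v].

End Graph.

(* Godsil's identity: once the depth exceeds the number of vertices, the recursion on
   the path-tree computes exactly the ratio of the partition functions of matchings
   avoiding the current path and avoiding it minus its endpoint, so at the root it
   returns p_{G,lambda}(v).  Two levels of the recursion x = 1 / (1 + lambda sum x')
   are Lipschitz in log-coordinates with constant
   g = (sqrt (1 + lambda D) - 1) / (sqrt (1 + lambda D) + 1), by Cauchy-Schwarz over at
   most D children.  All values lie in [1 / (1 + lambda D), 1], so the log-values at
   depths h and h + m differ by at most g^(h/2) ln (1 + lambda D); hence depth
   2 (ln (1 + lambda D) + ln (1/eps)) / ln (1/g) suffices, and ln (1/g) ~ 2 / sqrt (lambda D)
   gives both the growth bound and the limit sqrt lambda. *)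

From HB Require Import structures.
From mathcomp Require Import all_boot all_order all_algebra.
From mathcomp Require Import all_classical all_reals all_analysis.
From mathcomp Require Import ring lra.
Import Order.TTheory GRing.Theory Num.Theory numFieldNormedType.Exports.
Local Open Scope ring_scope.
Set Implicit Arguments. Unset Strict Implicit. Unset Printing Implicit Defensive.

Section Endpoints.
Variables (V E : finType) (ends : E -> V * V).

Definition other_end (e : E) (u : V) : V :=
  if (ends e).1 == u then (ends e).2 else (ends e).1.

Lemma stepE e u w : step ends e u w = incident ends e u && (w == other_end e u).
Proof.
rewrite /step /incident /other_end; case: (ends e) => a b /=.
have [->|nau] := eqVneq a u; have [->|nbu] := eqVneq b u => /=;
  by rewrite ?eqxx ?andbT ?orbF ?andbF //= ?(eq_sym w) ?orbb.
Qed.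

Lemma incident_other_end e u x : incident ends e u ->
  incident ends e x = (x == u) || (x == other_end e u).
Proof.
rewrite /incident /other_end; case: (ends e) => a b /=.
have [->|nau] := eqVneq a u => /=; first by rewrite !(eq_sym x).
by move=> /eqP ->; rewrite !(eq_sym x) orbC.
Qed.

Lemma is_loop_other_end e u : incident ends e u -> is_loop ends e = (other_end e u == u).
Proof.
rewrite /incident /other_end /is_loop; case: (ends e) => a b /=.
have [->|nau] := eqVneq a u => /=; first by rewrite eq_sym.
by move=> /eqP ->; rewrite eq_sym.
Qed.

Variables (R : realType) (lambda : R).

Lemma xrecS d u S : xrec ends lambda d.+1 u S =
  (1 + lambda * \sum_(e | incident ends e u && (other_end e u \notin S))
      xrec ends lambda d (other_end e u) (other_end e u |: S))^-1.
Proof.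
congr (1 + lambda * _)^-1; rewrite [RHS]big_mkcond; apply: eq_bigr => e _.
under eq_bigl do rewrite stepE -andbA.
case: (incident ends e u) => /=; last by rewrite big_pred0.
case: ifP => wS; last by rewrite big_pred0 // => w; case: eqP => // ->; rewrite wS.
by rewrite (big_pred1 (other_end e u)) // => w /=; case: eqP => // ->; rewrite wS.
Qed.

End Endpoints.

Section Matchings.
Variables (V E : finType) (ends : E -> V * V).
Local Notation inc := (incident ends).
Local Notation other_end := (other_end ends).

Definition avoids (M : {set E}) (T : {set V}) : bool :=
  [forall x in T, ~~ covers ends M x].

Lemma matching_noloop (M : {set E}) e : matching ends M -> e \in M -> ~~ is_loop ends e.
Proof. by case/andP => /forall_inP h _ /h. Qed.

Lemma matching_incident_eq (M : {set E}) e f x : matching ends M -> e \in M -> f \in M ->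
  inc e x -> inc f x -> e = f.
Proof.
case/andP => _ /forall_inP h eM fM iex ifx.
move: (h e eM) => /forall_inP /(_ f fM) /implyP.
by case: eqVneq => // _ /(_ isT) /existsP []; exists x; rewrite iex ifx.
Qed.

Lemma matching_intro (M : {set E}) : (forall e, e \in M -> ~~ is_loop ends e) ->
  (forall e f x, e \in M -> f \in M -> inc e x -> inc f x -> e = f) ->
  matching ends M.
Proof.
move=> noloop uniq_inc; apply/andP; split; first exact/forall_inP.
apply/forall_inP => e eM; apply/forall_inP => f fM; apply/implyP => nef.
apply/existsP => -[x /andP [iex ifx]].
by move/eqP: nef; apply; apply: (uniq_inc e f x).
Qed.

Lemma matching_sub (M M' : {set E}) : M' \subset M -> matching ends M -> matching ends M'.
Proof.
move=> /fintype.subsetP sub hM; apply: matching_intro => [e eM'|e f x eM' fM'].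
  by apply: (matching_noloop hM); apply: sub.
by apply: (matching_incident_eq hM); apply: sub.
Qed.

Lemma coversP (M : {set E}) x : reflect (exists2 f, f \in M & inc f x) (covers ends M x).
Proof. exact: (iffP exists_inP). Qed.

Lemma coversU1 e (M : {set E}) x : covers ends (e |: M) x = inc e x || covers ends M x.
Proof.
apply/coversP/orP => [[f]|].
  by rewrite in_setU1 => /orP [/eqP ->|fM] fx; [left|right; apply/coversP; exists f].
case=> [ex|/coversP [f fM fx]]; first by exists e; rewrite ?setU11.
by exists f; rewrite // in_setU1 fM orbT.
Qed.

Lemma avoidsP (M : {set E}) (T : {set V}) :
  reflect (forall x, x \in T -> ~~ covers ends M x) (avoids M T).
Proof. exact: forall_inP. Qed.

Lemma avoidsD1 (M : {set E}) (S : {set V}) u : u \in S ->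
  avoids M S = avoids M (S :\ u) && ~~ covers ends M u.
Proof.
move=> uS; apply/avoidsP/andP => [avS|[/avoidsP avS' nu] x xS].
  by split; [apply/avoidsP => x /setD1P [_ /avS]|apply: avS].
by case: (eqVneq x u) => [->//|nxu]; apply: avS'; rewrite in_setD1 nxu.
Qed.

Lemma matching0 : matching ends finset.set0.
Proof. by apply: matching_intro => [e|e f x]; rewrite finset.in_set0. Qed.

Lemma avoids0 T : avoids finset.set0 T.
Proof. by apply/avoidsP => x _; apply/coversP => -[f]; rewrite finset.in_set0. Qed.

(* Adding an edge e = uw with u in S and w outside S is a bijection from the
   matchings avoiding w |: S onto the matchings avoiding S :\ u that contain e. *)
Section AddEdge.
Variables (S : {set V}) (u : V) (e : E).
Hypotheses (uS : u \in S) (eu : inc e u) (wS : other_end e u \notin S).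
Local Notation w := (other_end e u).

Lemma incident_addedge x : inc e x = (x == u) || (x == w).
Proof. exact: incident_other_end. Qed.

Lemma avoids_addedge_notin (M : {set E}) : avoids M (w |: S) -> e \notin M.
Proof.
move=> /avoidsP /(_ u); rewrite in_setU1 uS orbT => /(_ isT).
by apply: contra => eM; apply/coversP; exists e.
Qed.

Lemma matching_addedge (M : {set E}) :
  matching ends M -> avoids M (w |: S) ->
  matching ends (e |: M) && avoids (e |: M) (S :\ u).
Proof.
move=> hM avM.
have ex_inS x : inc e x -> x \in w |: S.
  by rewrite incident_addedge in_setU1 => /orP [/eqP ->|->//]; rewrite uS orbT.
have ex_free f x : f \in M -> inc e x -> inc f x -> False.
  move=> fM ex fx; move/avoidsP: avM => /(_ x (ex_inS x ex)) /coversP; apply.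
  by exists f.
apply/andP; split.
  apply: matching_intro => [f|f f' x].
    rewrite in_setU1 => /orP [/eqP ->|]; last exact: matching_noloop.
    by rewrite (is_loop_other_end eu); apply: contraNneq wS => ->.
  rewrite !in_setU1 => /orP [/eqP ->|fM] /orP [/eqP ->|f'M] //.
  - by move=> ex f'x; case: (ex_free f' x f'M ex f'x).
  - by move=> fx ex; case: (ex_free f x fM ex fx).
  - exact: (matching_incident_eq hM).
apply/avoidsP => x /setD1P [nxu xS].
rewrite coversU1 incident_addedge (negbTE nxu) /=; apply/norP; split.
  by apply: contraNneq wS => <-.
by move/avoidsP: avM; apply; rewrite in_setU1 xS orbT.
Qed.

Lemma matching_deledge (M : {set E}) : e \notin M ->
  matching ends (e |: M) -> avoids (e |: M) (S :\ u) ->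
  matching ends M && avoids M (w |: S).
Proof.
move=> eM hM avM; apply/andP; split; first exact: matching_sub (finset.subsetUr _ _) hM.
apply/avoidsP => x xwS; apply/coversP => -[f fM fx].
have [ex|] := boolP (inc e x).
  have efe := matching_incident_eq hM (setU11 e M) (setU1r e fM) ex fx.
  by move: eM; rewrite efe fM.
rewrite incident_addedge negb_or => /andP [nxu nxw].
have xS : x \in S :\ u by move: xwS; rewrite in_setU1 in_setD1 nxu (negbTE nxw).
move/avoidsP: avM => /(_ x xS); rewrite coversU1 => /norP [_ /coversP]; apply.
by exists f.
Qed.

Lemma addedgeE (M : {set E}) :
  [&& matching ends (e |: M), avoids (e |: M) (S :\ u) & e \in e |: M]
    && ((e |: M) :\ e == M)
  = matching ends M && avoids M (w |: S).
Proof.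
rewrite setU11 andbT; case: (boolP (e \in M)) => eM.
  have -> : ((e |: M) :\ e == M) = false.
    by apply/negbTE/eqP => h; move: eM; rewrite -h setD11.
  rewrite andbF; apply/esym/negbTE/andP => -[_ /avoids_addedge_notin].
  by rewrite eM.
rewrite (setU1K eM) eqxx andbT.
apply/idP/idP => [/andP [hM avM]|/andP [hM avM]].
  exact: matching_deledge.
exact: matching_addedge.
Qed.

End AddEdge.

Variables (R : realType) (lambda : R).

Definition Zavoid (T : {set V}) : R :=
  \sum_(M : {set E} | matching ends M && avoids M T) lambda ^+ #|M|.

Lemma sum_matchings_covering (S : {set V}) u :
  \sum_(M | [&& matching ends M, avoids M (S :\ u) & covers ends M u]) lambda ^+ #|M| =
  \sum_(e | inc e u) \sum_(M | [&& matching ends M, avoids M (S :\ u) & e \in M])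
      lambda ^+ #|M|.
Proof.
transitivity (\sum_(M | [&& matching ends M, avoids M (S :\ u) & covers ends M u])
   \sum_(e | inc e u && (e \in M)) lambda ^+ #|M|).
  apply: eq_bigr => M /and3P [hM _ /coversP [e0 e0M e0u]].
  rewrite (big_pred1 e0) // => e /=; apply/andP/eqP => [[eu eM]|->//].
  exact: (matching_incident_eq hM eM e0M eu e0u).
rewrite (exchange_big_dep (fun e => inc e u)) /=; last by move=> M e _ /andP [].
apply: eq_bigr => e eu; apply: eq_bigl => M; rewrite eu /=.
apply/idP/idP => [/andP [/and3P [-> -> _] ->]//|/and3P [-> -> eM]].
by rewrite eM andbT; apply/coversP; exists e.
Qed.

Lemma sum_matchings_through (S : {set V}) u e : u \in S -> inc e u ->
  \sum_(M | [&& matching ends M, avoids M (S :\ u) & e \in M]) lambda ^+ #|M| =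
  if other_end e u \notin S then lambda * Zavoid (other_end e u |: S) else 0.
Proof.
move=> uS eu; case: ifPn => [wS|/negPn wS].
  rewrite (reindex_onto (fun M => e |: M) (fun M => M :\ e)); last first.
    by move=> M /and3P [_ _ eM]; rewrite finset.setD1K.
  under eq_bigl => M do rewrite (addedgeE uS eu wS M).
  rewrite /Zavoid mulr_sumr; apply: eq_bigr => M /andP [_ /(avoids_addedge_notin uS eu) eM].
  by rewrite cardsU1 eM add1n exprS.
rewrite big_pred0 // => M; apply/and3P => -[hM avM eM].
case: (eqVneq (other_end e u) u) => [wu|nwu].
  by move: (matching_noloop hM eM); rewrite (is_loop_other_end eu) wu eqxx.
move/avoidsP: avM => /(_ (other_end e u)); rewrite in_setD1 nwu wS => /(_ isT).
by move/coversP; apply; exists e; rewrite // (incident_other_end _ eu) eqxx orbT.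
Qed.

Lemma Zavoid_setD1 (S : {set V}) u : u \in S ->
  Zavoid (S :\ u) = Zavoid S +
    lambda * \sum_(e | inc e u && (other_end e u \notin S)) Zavoid (other_end e u |: S).
Proof.
move=> uS; rewrite /Zavoid (bigID (fun M => covers ends M u)) /= addrC; congr (_ + _).
  by apply: eq_bigl => M; rewrite (avoidsD1 M uS) andbA.
under eq_bigl do rewrite -andbA.
rewrite sum_matchings_covering (eq_bigr _ (fun e eu => sum_matchings_through uS eu)).
by rewrite [RHS]mulr_sumr [RHS]big_mkcondr; apply: eq_bigr => e _; case: ifP.
Qed.

Hypothesis lambda_gt0 : 0 < lambda.

Lemma Zavoid_gt0 T : 0 < Zavoid T.
Proof.
rewrite /Zavoid (bigD1 finset.set0) /=; last by rewrite matching0 avoids0.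
rewrite cards0 expr0 ltr_wpDr //; apply: sumr_ge0 => M _.
exact/exprn_ge0/ltW.
Qed.

End Matchings.

Section PartitionRatio.
Variables (V E : finType) (ends : E -> V * V) (R : realType) (lambda : R).
Hypothesis lambda_gt0 : 0 < lambda.
Local Notation Zavoid := (Zavoid ends lambda).
Local Notation other_end := (other_end ends).

Lemma card_setCU1_lt (S : {set V}) w : w \notin S -> (#|~: (w |: S)| < #|~: S|)%N.
Proof.
move=> wS; apply: proper_card; rewrite finset.properC; apply/properP.
by split; [exact: finset.subsetUr|exists w; rewrite ?setU11].
Qed.

Lemma xrec_Zavoid d u (S : {set V}) : u \in S -> (#|~: S| < d)%N ->
  xrec ends lambda d u S = Zavoid S / Zavoid (S :\ u).
Proof.
elim: d u S => [//|d IHd] u S uS ltSd.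
rewrite xrecS (Zavoid_setD1 ends lambda uS).
set sumZ := \sum_(e | _) Zavoid _.
have -> : \sum_(e | incident ends e u && (other_end e u \notin S))
    xrec ends lambda d (other_end e u) (other_end e u |: S) = sumZ / Zavoid S.
  rewrite mulr_suml; apply: eq_bigr => e /andP [_ wS].
  rewrite IHd ?setU11 ?(setU1K wS) //.
  exact: leq_trans (card_setCU1_lt wS) _.
have Z_neq0 := lt0r_neq0 (Zavoid_gt0 ends lambda_gt0 S).
by rewrite -{1}(divff Z_neq0) mulrA -mulrDl invf_div.
Qed.

Lemma p_uncov_xrec v d : (#|V| < d)%N ->
  p_uncov ends lambda v = xrec ends lambda d v [set v].
Proof.
move=> ltVd; rewrite xrec_Zavoid ?set11 //; last exact: leq_ltn_trans (max_card _) ltVd.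
rewrite /p_uncov finset.setDv /Zavoid; congr (_ / _); apply: eq_bigl => M.
  by congr (_ && _); apply/idP/avoidsP => [nvM x /set1P ->//|/(_ v (set11 v))].
by rewrite -[LHS]andbT; congr (_ && _); apply/esym/avoidsP => x; rewrite finset.in_set0.
Qed.

End PartitionRatio.

Section RealFacts.
Variable R : realType.

Lemma sqr_sum_le_card_sum_sqr (I : finType) (P : pred I) (y : I -> R) :
  (\sum_(i | P i) y i) ^+ 2 <= #|P|%:R * \sum_(i | P i) y i ^+ 2.
Proof.
set Y := \sum_(i | P i) y i; set Q := \sum_(i | P i) y i ^+ 2.
have sum_cst (c : R) : \sum_(j | P j) c = #|P|%:R * c.
  by rewrite (eq_bigl (fun j => j \in P)) // sumr_const mulr_natl.
have sum_sqrB i : \sum_(j | P j) (y i - y j) ^+ 2 = #|P|%:R * y i ^+ 2 + Q - 2 * (y i * Y).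
  rewrite (eq_bigr (fun j => y i ^+ 2 + y j ^+ 2 - (y i * y j) *+ 2)); last first.
    by move=> j _; rewrite sqrrB addrAC.
  by rewrite sumrB big_split /= sum_cst -/Q sumrMnl -mulr_sumr -/Y; ring.
have : 0 <= \sum_(i | P i) \sum_(j | P j) (y i - y j) ^+ 2.
  by apply/sumr_ge0 => i _; apply/sumr_ge0 => j _; apply: sqr_ge0.
rewrite (eq_bigr _ (fun k _ => sum_sqrB k)) sumrB big_split /= -mulr_sumr -/Q sum_cst.
rewrite -mulr_sumr -mulr_suml -/Y.
nra.
Qed.

Lemma sumr_le_card (I : finType) (P : pred I) (y : I -> R) :
  (forall i, y i <= 1) -> \sum_(i | P i) y i <= #|P|%:R.
Proof.
move=> le1; apply: le_trans (ler_sum _ (fun i _ => le1 i)) _.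
by rewrite (eq_bigl (fun j => j \in P)) // sumr_const.
Qed.

Lemma ler_dist_telescope (f : nat -> R) (s : R) N :
  (forall k, `|f k.+1 - f k| <= s) -> `|f N - f 0%N| <= N%:R * s.
Proof.
move=> step; elim: N => [|N IHN]; first by rewrite subrr normr0 mul0r.
apply: le_trans (ler_distD (f N) _ _) _.
by rewrite mulrS mulrDl mul1r lerD.
Qed.

Lemma le_of_le_add_divn (x b C : R) : 0 <= C ->
  (forall N : nat, (0 < N)%N -> x <= b + C / N%:R) -> x <= b.
Proof.
move=> C_ge0 le_x; apply/ler_addgt0Pr => e e_gt0.
set N := (Num.truncn (C / e)).+1.
apply: le_trans (le_x N isT) _; rewrite lerD2l.
have N_gt0 : 0 < (N%:R : R) by rewrite ltr0n.
rewrite ler_pdivrMr // mulrC -ler_pdivrMr //.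
exact/ltW/truncnS_gt.
Qed.

Lemma expR_subr1_le (a : R) : 0 <= a -> expR a - 1 <= a * expR a.
Proof.
move=> a_ge0; have := expR_ge1Dx (- a); rewrite expRN.
rewrite -(ler_pM2r (expR_gt0 a)) mulVf ?gt_eqF ?expR_gt0 //.
lra.
Qed.

Lemma expR_divn_bound (d : R) N : 0 <= d -> (0 < N)%N ->
  N%:R * ((expR (d / N%:R) - 1) * expR (d / N%:R))
    <= d + 2 * d ^+ 2 * expR (2 * d) / N%:R.
Proof.
move=> d_ge0 N_gt0; have Nr_gt0 : 0 < (N%:R : R) by rewrite ltr0n.
set a := d / N%:R.
have a_ge0 : 0 <= a by exact/divr_ge0/ltW.
have Na : N%:R * a = d by rewrite /a mulrC divfK ?gt_eqF.
have le_2a_2d : 2 * a <= 2 * d by rewrite ler_pM2l // ler_pdivrMr // ler_peMr // ler1n.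
have exp2a : expR (2 * a) - 1 <= 2 * a * expR (2 * d).
  apply: le_trans (expR_subr1_le _) _; first by rewrite mulr_ge0.
  by rewrite ler_wpM2l ?mulr_ge0 // ler_expR.
have -> : 2 * d ^+ 2 * expR (2 * d) / N%:R = d * (2 * a * expR (2 * d)).
  by rewrite /a; field; rewrite gt_eqF.
apply: (@le_trans _ _ (d * expR (2 * a))).
  have -> : expR (2 * a) = expR a * expR a by rewrite -expRD mulr2n mulrDl mul1r.
  rewrite -Na -mulrA ler_wpM2l ?ler0n // mulrA.
  by rewrite ler_wpM2r ?expR_ge0 // expR_subr1_le.
by rewrite -[X in X + _]mulr1 -mulrDr ler_wpM2l //; lra.
Qed.

Lemma ln_dist_le (a b K : R) : 0 < a -> 0 < b ->
  `|a - b| <= K * a -> `|a - b| <= K * b -> `|ln a - ln b| <= K.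
Proof.
move=> a_gt0 b_gt0 le_a le_b.
have ln_subr_le x y : 0 < x -> 0 < y -> x - y <= K * y -> ln x - ln y <= K.
  move=> x_gt0 y_gt0 le_xy; rewrite -ln_div ?posrE //.
  have -> : x / y = 1 + (x - y) / y by rewrite mulrBl divff ?gt_eqF // addrC subrK.
  apply: le_trans (le_ln1Dx _) _; last by rewrite ler_pdivrMr // mulrC.
  by rewrite mulrBl divff ?gt_eqF //; have := divr_gt0 x_gt0 y_gt0; lra.
rewrite ler_norml; apply/andP; split.
  by rewrite lerNl opprB ln_subr_le // (le_trans (ler_norm _)) // distrC.
by rewrite ln_subr_le // (le_trans (ler_norm _)).
Qed.

Lemma le_expR_mul_of_ln_dist (z z' d : R) : 0 < z -> 0 < z' ->
  `|ln z - ln z'| <= d -> z <= expR d * z'.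
Proof.
move=> z_gt0 z'_gt0; rewrite ler_norml => /andP [_ le_d].
by rewrite -(lnK z_gt0) -(lnK z'_gt0) -expRD ler_expR; lra.
Qed.

Lemma dist_inv1D_le (t t' A : R) : 0 <= t -> 0 <= t' -> 1 <= A ->
  t <= A * t' -> t' <= A * t ->
  `|(1 + t')^-1 - (1 + t)^-1| <= (A - 1) * A * ((1 + t)^-1 * (1 - (1 + t)^-1)).
Proof.
move=> t_ge0 t'_ge0 A_ge1 le_t le_t'.
have t1_neq0 : 1 + t != 0 by apply/lt0r_neq0; lra.
have t'1_neq0 : 1 + t' != 0 by apply/lt0r_neq0; lra.
set W := ((1 + t) * (1 + t) * (1 + t'))^-1.
have W_ge0 : 0 <= W by rewrite invr_ge0 !mulr_ge0 //; lra.
have -> : (1 + t')^-1 - (1 + t)^-1 = ((t - t') * (1 + t)) * W.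
  by rewrite /W; field; rewrite t1_neq0 t'1_neq0.
have -> : (A - 1) * A * ((1 + t)^-1 * (1 - (1 + t)^-1)) = ((A - 1) * A * t * (1 + t')) * W.
  by rewrite /W; field; rewrite t1_neq0 t'1_neq0.
rewrite normrM (ger0_norm W_ge0) ler_wpM2r // normrM (@ger0_norm _ (1 + t)); last by lra.
have [le_tt'|lt_t't] := lerP t t'.
  have le1 : t' - t <= (A - 1) * t by lra.
  have le2 : 1 + t <= A * (1 + t') by nra.
  have tt'_ge0 : 0 <= t' - t by lra.
  have t1_ge0 : 0 <= 1 + t by lra.
  by have := ler_pM tt'_ge0 t1_ge0 le1 le2; lra.
have le1 : t' * (1 + t) <= A * t * (1 + t') by nra.
have A1_ge0 : 0 <= A - 1 by lra.
by have := ler_wpM2l A1_ge0 le1; nra.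
Qed.

Lemma sqrt_natr_ge1 n : (1 <= n)%N -> 1 <= Num.sqrt (n%:R : R).
Proof. by move=> n_ge1; rewrite -[X in X <= _]sqrtr1 ler_wsqrtr // ler1n. Qed.

End RealFacts.

Section Contraction.
Variables (R : realType) (lambda : R) (D : nat).
Hypotheses (lambda_gt0 : 0 < lambda) (D_ge1 : (1 <= D)%N).

Definition rootD : R := Num.sqrt (1 + lambda * D%:R).

(* The supremum of [lambda * \sum_i y_i (1 - y_i) / (1 + lambda * \sum_i y_i)]
   over at most [D] nonnegative [y_i]. *)
Definition rateD : R := (rootD - 1) / (rootD + 1).

Lemma lambdaD_gt0 : 0 < lambda * D%:R.
Proof. by rewrite mulr_gt0 // ltr0n. Qed.

Lemma rootD_sqr : rootD ^+ 2 = 1 + lambda * D%:R.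
Proof. by rewrite sqr_sqrtr //; have := lambdaD_gt0; lra. Qed.

Lemma rootD_gt1 : 1 < rootD.
Proof.
have := rootD_sqr; have := lambdaD_gt0; have : 0 <= rootD := sqrtr_ge0 _.
nra.
Qed.

Lemma rateD_gt0 : 0 < rateD.
Proof. by have := rootD_gt1; rewrite /rateD => ?; rewrite divr_gt0 //; lra. Qed.

Lemma rateD_lt1 : rateD < 1.
Proof. by have := rootD_gt1; rewrite /rateD => ?; rewrite ltr_pdivrMr; lra. Qed.

Lemma sum_mul1B_le_rateD (I : finType) (P : pred I) (y : I -> R) :
  (#|P| <= D)%N -> (forall i, 0 <= y i) ->
  lambda * \sum_(i | P i) (y i * (1 - y i)) <= rateD * (1 + lambda * \sum_(i | P i) y i).
Proof.
move=> card_P y_ge0.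
set Y := \sum_(i | P i) y i; set Q := \sum_(i | P i) y i ^+ 2.
have -> : \sum_(i | P i) (y i * (1 - y i)) = Y - Q.
  by rewrite -sumrB; apply: eq_bigr => i _; rewrite mulrBr mulr1 expr2.
have Q_ge0 : 0 <= Q by apply: sumr_ge0 => i _; apply: sqr_ge0.
have Y_ge0 : 0 <= Y by apply: sumr_ge0.
have YQ : Y ^+ 2 <= D%:R * Q.
  apply: le_trans (sqr_sum_le_card_sum_sqr P y) _.
  by rewrite ler_wpM2r // ler_nat.
have := rootD_gt1; have := rootD_sqr; rewrite /rateD; set q := rootD => q_sqr q_gt1.
set s := lambda * Y; set T := lambda * Q.
have sT : s ^+ 2 <= T * (q ^+ 2 - 1).
  have -> : T * (q ^+ 2 - 1) = lambda ^+ 2 * (D%:R * Q) by rewrite q_sqr /T; ring.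
  by rewrite exprMn ler_wpM2l ?sqr_ge0.
have s_ge0 : 0 <= s by rewrite mulr_ge0 // ltW.
have T_ge0 : 0 <= T by rewrite mulr_ge0 // ltW.
rewrite mulrBr -/s -/T mulrC mulrA ler_pdivlMr; last by lra.
(* The bound is attained at [s = q - 1]. *)
have := sqr_ge0 (s - (q - 1)); nra.
Qed.

Definition ln_two_step (I : finType) (P : pred I) (t : I -> R) : R :=
  ln (1 + lambda * \sum_(i | P i) (1 + t i)^-1).

Lemma ln_two_step_arg_gt0 (I : finType) (P : pred I) (t : I -> R) :
  (forall i, 0 <= t i) -> 0 < 1 + lambda * \sum_(i | P i) (1 + t i)^-1.
Proof.
move=> t_ge0; have : 0 <= lambda * \sum_(i | P i) (1 + t i)^-1; last lra.
apply: mulr_ge0; first exact: ltW.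
by apply: sumr_ge0 => i _; rewrite invr_ge0; have := t_ge0 i; lra.
Qed.

Lemma ln_two_step_ratio (I : finType) (P : pred I) (t t' : I -> R) (A : R) :
  (#|P| <= D)%N -> 1 <= A -> (forall i, 0 <= t i) -> (forall i, 0 <= t' i) ->
  (forall i, P i -> t i <= A * t' i) -> (forall i, P i -> t' i <= A * t i) ->
  `|ln_two_step P t' - ln_two_step P t| <= (A - 1) * A * rateD.
Proof.
move=> card_P A_ge1 t_ge0 t'_ge0 le_t le_t'.
have dist_le (u u' : I -> R) : (forall i, 0 <= u i) -> (forall i, 0 <= u' i) ->
    (forall i, P i -> u i <= A * u' i) -> (forall i, P i -> u' i <= A * u i) ->
    `|(1 + lambda * \sum_(i | P i) (1 + u' i)^-1) - (1 + lambda * \sum_(i | P i) (1 + u i)^-1)|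
    <= (A - 1) * A * rateD * (1 + lambda * \sum_(i | P i) (1 + u i)^-1).
  move=> u_ge0 u'_ge0 le_u le_u'.
  rewrite opprD addrACA subrr add0r -mulrBr -sumrB normrM gtr0_norm //.
  apply: le_trans (ler_wpM2l (ltW lambda_gt0) (ler_norm_sum _ _ _)) _.
  apply: le_trans (ler_wpM2l (ltW lambda_gt0) (ler_sum _ (fun i Pi =>
    dist_inv1D_le (u_ge0 i) (u'_ge0 i) A_ge1 (le_u i Pi) (le_u' i Pi)))) _.
  rewrite -mulr_sumr mulrCA -mulrA ler_wpM2l ?mulr_ge0 //; try lra.
  by apply: sum_mul1B_le_rateD => // i; rewrite invr_ge0; have := u_ge0 i; lra.
apply: ln_dist_le; rewrite ?ln_two_step_arg_gt0 //; last exact: dist_le.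
by rewrite distrC; apply: dist_le.
Qed.

Lemma ln_two_step_lipschitz_exp (I : finType) (P : pred I) (t eta : I -> R) (d : R) :
  (#|P| <= D)%N -> (forall i, 0 <= t i) -> 0 <= d -> (forall i, `|eta i| <= d) ->
  `|ln_two_step P (fun i => t i * expR (eta i)) - ln_two_step P t| <= rateD * d.
Proof.
move=> card_P t_ge0 d_ge0 eta_le.
have rate_ge0 := ltW rateD_gt0.
apply: (@le_of_le_add_divn _ _ _ (rateD * (2 * d ^+ 2 * expR (2 * d)))).
  apply: mulr_ge0 => //; apply: mulr_ge0; last exact: expR_ge0.
  by apply: mulr_ge0; [|exact: sqr_ge0].
move=> N N_gt0; have Nr_gt0 : 0 < (N%:R : R) by rewrite ltr0n.
set A := expR (d / N%:R).
have A_ge1 : 1 <= A.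
  by apply: le_trans (expR_ge1Dx _); rewrite lerDl; exact: divr_ge0 d_ge0 (ltW Nr_gt0).
(* A discrete mean-value argument: go from [t] to [t * expR eta] in [N] steps
   of ratio at most [A], then let [N] grow. *)
pose path k i := t i * expR (k%:R / N%:R * eta i).
have path_ge0 k i : 0 <= path k i by rewrite mulr_ge0 ?expR_ge0.
have pathS k i : path k.+1 i = path k i * expR (eta i / N%:R).
  by rewrite /path -[RHS]mulrA -expRD mulrS; congr (_ * expR _); field; rewrite gt_eqF.
have eta_itv i : - (d / N%:R) <= eta i / N%:R <= d / N%:R.
  have := eta_le i; rewrite ler_norml => /andP [le1 le2].
  by rewrite -mulNr !ler_wpM2r // invr_ge0 ltW.
have step k :
    `|ln_two_step P (path k.+1) - ln_two_step P (path k)| <= (A - 1) * A * rateD.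
  apply: ln_two_step_ratio => // i _; rewrite pathS; have /andP [le1 le2] := eta_itv i.
    rewrite mulrCA -{1}[path k i]mulr1 ler_wpM2l // /A -expRD.
    by apply: le_trans (expR_ge1Dx _); lra.
  by rewrite mulrC ler_wpM2r // ler_expR.
have path_N : path N = (fun i => t i * expR (eta i)).
  by apply/funext => i; rewrite /path divff ?gt_eqF // mul1r.
have path_0 : path 0%N = t by apply/funext => i; rewrite /path !mul0r expR0 mulr1.
have := @ler_dist_telescope _ (fun k => ln_two_step P (path k)) _ N step.
rewrite /= path_N path_0 => /le_trans; apply.
have -> : N%:R * ((A - 1) * A * rateD) = rateD * (N%:R * ((A - 1) * A)) by ring.
have -> : rateD * d + rateD * (2 * d ^+ 2 * expR (2 * d)) / N%:R =
  rateD * (d + 2 * d ^+ 2 * expR (2 * d) / N%:R) by ring.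
by rewrite ler_wpM2l // expR_divn_bound.
Qed.

Lemma ln_two_step_lipschitz (I : finType) (P : pred I) (t t' : I -> R) (d : R) :
  (#|P| <= D)%N -> (forall i, 0 <= t i) -> (forall i, 0 <= t' i) -> 0 <= d ->
  (forall i, P i -> t i <= expR d * t' i) -> (forall i, P i -> t' i <= expR d * t i) ->
  `|ln_two_step P t' - ln_two_step P t| <= rateD * d.
Proof.
move=> card_P t_ge0 t'_ge0 d_ge0 le_t le_t'.
have t'_gt0 i : P i -> 0 < t i -> 0 < t' i.
  move=> Pi t_gt0; rewrite lt_neqAle t'_ge0 andbT eq_sym; apply/eqP => t'0.
  by have := le_t i Pi; rewrite t'0 mulr0; lra.
pose eta i := if P i && (0 < t i) then ln (t' i / t i) else 0.
have -> : ln_two_step P t' = ln_two_step P (fun i => t i * expR (eta i)).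
  congr (ln (1 + lambda * _)); apply: eq_bigr => i Pi; rewrite /eta Pi /=.
  have [t_gt0|/negbT t_ngt0] := ifP.
    by rewrite lnK ?posrE ?divr_gt0 ?t'_gt0 // mulrC divfK ?gt_eqF.
  have t0 : t i = 0 by apply/eqP; rewrite eq_le t_ge0 andbT leNgt.
  have t'0 : t' i = 0.
    by apply/eqP; rewrite eq_le t'_ge0 andbT; have := le_t' i Pi; rewrite t0 mulr0.
  by rewrite t0 t'0 mul0r.
apply: ln_two_step_lipschitz_exp => // i; rewrite /eta.
case: ifP => [/andP [Pi t_gt0]|_]; last by rewrite normr0.
have q_gt0 : 0 < t' i / t i by rewrite divr_gt0 ?t'_gt0.
rewrite ler_norml; apply/andP; split.
  rewrite -[X in X <= _]expRK ler_ln ?posrE ?expR_gt0 // expRN.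
  by rewrite ler_pdivlMr // mulrC ler_pdivrMr ?expR_gt0 // mulrC le_t.
by rewrite -[X in _ <= X]expRK ler_ln ?posrE ?expR_gt0 // ler_pdivrMr // le_t'.
Qed.

End Contraction.

Section TruncationError.
Variables (V E : finType) (ends : E -> V * V) (R : realType) (lambda : R) (D : nat).
Hypotheses (lambda_gt0 : 0 < lambda) (D_ge1 : (1 <= D)%N).
Hypothesis deg_le : max_degree_le ends D.
Local Notation inc := (incident ends).
Local Notation other_end := (other_end ends).
Local Notation x := (xrec ends lambda).
Local Notation children u S := [pred e | inc e u && (other_end e u \notin S)].

Lemma card_children_le u (S : {set V}) : (#|children u S| <= D)%N.
Proof.
apply: leq_trans (deg_le u).
have [le_card _] := leq_card_setU [set e | (ends e).1 == u] [set e | (ends e).2 == u].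
apply: leq_trans le_card; apply/subset_leq_card/fintype.subsetP => e.
by rewrite !inE /incident => /andP [].
Qed.

Definition leaf_gap : R := ln (1 + lambda * D%:R).

Lemma leaf_gap_gt0 : 0 < leaf_gap.
Proof. by rewrite ln_gt0 // ltrDl lambdaD_gt0. Qed.

Lemma xrec_itv d u S : (1 + lambda * D%:R)^-1 <= x d u S <= 1.
Proof.
have lD_gt0 := lambdaD_gt0 lambda_gt0 D_ge1.
elim: d u S => [|d IHd] u S; first by rewrite lexx andbT invf_le1; lra.
rewrite xrecS; set s := \sum_(e | _) _.
have s_ge0 : 0 <= s.
  apply: sumr_ge0 => e _; apply: le_trans (proj1 (andP (IHd _ _))).
  by rewrite invr_ge0; lra.
have s_le : s <= D%:R.
  apply: le_trans (sumr_le_card _ (fun e => proj2 (andP (IHd _ (_ |: S))))) _.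
  by rewrite ler_nat card_children_le.
have ls_le : lambda * s <= lambda * D%:R by rewrite ler_wpM2l // ltW.
have ls_ge0 : 0 <= lambda * s by rewrite mulr_ge0 // ltW.
by rewrite lef_pV2 ?posrE ?invf_le1; lra.
Qed.

Lemma xrec_gt0 d u S : 0 < x d u S.
Proof.
apply: lt_le_trans (proj1 (andP (xrec_itv d u S))).
by rewrite invr_gt0; have := lambdaD_gt0 lambda_gt0 D_ge1; lra.
Qed.

Lemma ln_xrec_dist_le_leaf_gap d d' u S u' S' :
  `|ln (x d u S) - ln (x d' u' S')| <= leaf_gap.
Proof.
have ln_itv d'' v T : - leaf_gap <= ln (x d'' v T) <= 0.
  have /andP [lb ub] := xrec_itv d'' v T; have x_gt0 := xrec_gt0 d'' v T.
  have lD_gt0 := lambdaD_gt0 lambda_gt0 D_ge1.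
  rewrite ln_le0 // andbT /leaf_gap -lnV ?posrE; last lra.
  by rewrite ler_ln ?posrE // invr_gt0; lra.
have /andP [? ?] := ln_itv d u S; have /andP [? ?] := ln_itv d' u' S'.
by rewrite ler_norml; apply/andP; split; lra.
Qed.

Definition grandchild_sum k u S e : R :=
  let w := other_end e u in
  lambda * \sum_(f | inc f w && (other_end f w \notin w |: S))
    x k (other_end f w) (other_end f w |: (w |: S)).

Lemma grandchild_sum_ge0 k u S e : 0 <= grandchild_sum k u S e.
Proof.
by apply: mulr_ge0; [exact: ltW|apply: sumr_ge0 => f _; exact/ltW/xrec_gt0].
Qed.

Lemma ln_xrecSS k u S :
  ln (x k.+2 u S) = - ln_two_step lambda (children u S) (grandchild_sum k u S).
Proof.
rewrite xrecS lnV ?posrE; last first.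
  rewrite ltr_pwDl //; apply: mulr_ge0; first exact: ltW.
  by apply: sumr_ge0 => e _; apply/ltW/xrec_gt0.
by congr (- ln (1 + lambda * _)); apply: eq_bigr => e _; rewrite xrecS.
Qed.

Lemma xrec_ln_dist d m u S :
  `|ln (x d u S) - ln (x (d + m) u S)| <= rateD lambda D ^+ d./2 * leaf_gap.
Proof.
elim/ltn_ind: d m u S => -[|[|d]] IHd m u S;
  try by rewrite expr0 mul1r ln_xrec_dist_le_leaf_gap.
have rate_gt0 := rateD_gt0 lambda_gt0 D_ge1.
rewrite !addSn !ln_xrecSS opprK addrC /= exprS -mulrA.
apply: ln_two_step_lipschitz => //.
- exact: card_children_le.
- exact: grandchild_sum_ge0.
- exact: grandchild_sum_ge0.
- by rewrite mulr_ge0 ?exprn_ge0 ?ltW ?leaf_gap_gt0.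
all: move=> e _; rewrite /grandchild_sum mulrCA; apply: ler_wpM2l; first exact: ltW.
all: rewrite mulr_sumr; apply: ler_sum => f _; apply: le_expR_mul_of_ln_dist; rewrite ?xrec_gt0 //.
  exact: IHd.
by rewrite distrC IHd.
Qed.

End TruncationError.

Lemma hbar_bound_arith (R : realFieldType) (s1 l1 lD sD l : R) :
  0 <= s1 -> 0 <= l1 -> 0 <= lD -> 1 <= sD -> 2^-1 <= l ->
  (s1 + 1) * sD * (l1 + lD + l) + 2 <= ((s1 + 1) * (2 * l1 + 3) + 4) * sD * l * (1 + lD).
Proof.
move=> s1_ge0 l1_ge0 lD_ge0 sD_ge1 l_ge.
have sum_le : l1 + lD + l <= (2 * l1 + 3) * l * (1 + lD).
  have : 0 <= l1 * (2 * l - 1) by apply: mulr_ge0; lra.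
  have : 0 <= lD * (3 * l - 1) by apply: mulr_ge0; lra.
  have : 0 <= l1 * l * lD by rewrite !mulr_ge0 //; lra.
  nra.
have two_le : 2 <= 4 * sD * l * (1 + lD).
  have : 0 <= sD * lD by rewrite mulr_ge0 //; lra.
  have : 2^-1 <= l * (sD * (1 + lD)) by rewrite -[X in X <= _]mulr1 ler_pM //; nra.
  nra.
have : (s1 + 1) * sD * (l1 + lD + l) <= (s1 + 1) * sD * ((2 * l1 + 3) * l * (1 + lD)).
  by rewrite ler_wpM2l // mulr_ge0 //; lra.
nra.
Qed.

Local Open Scope classical_set_scope.

Section TruncationDepth.
Variables (R : realType) (lambda : R).
Hypothesis lambda_gt0 : 0 < lambda.

Definition rate_exponent (D : nat) : R := ln (rateD lambda D)^-1.

Definition depth_ratio (eps : R) (D : nat) : R :=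
  (leaf_gap lambda D + ln eps^-1) / rate_exponent D.

(* Every two levels of the path-tree contract the error by [rateD]. *)
Definition hbar (eps : R) (D : nat) : nat := ((Num.truncn (depth_ratio eps D)).+1).*2.

Section FixedDegree.
Variable D : nat.
Hypothesis D_ge1 : (1 <= D)%N.
Local Notation g := (rateD lambda D).
Local Notation q := (rootD lambda D).
Local Notation c := (rate_exponent D).
Local Notation L := (leaf_gap lambda D).
Local Notation sD := (Num.sqrt (D%:R : R)).

Lemma rate_exponent_gt0 : 0 < c.
Proof. by rewrite ln_gt0 // invf_gt1 ?rateD_gt0 ?rateD_lt1. Qed.

Lemma rate_exponent_ge : 2 / (q + 1) <= c.
Proof.
have g_gt0 := rateD_gt0 lambda_gt0 D_ge1; have q_gt1 := rootD_gt1 lambda_gt0 D_ge1.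
have g_def : g = 1 - 2 / (q + 1) by rewrite /rateD; field; rewrite gt_eqF //; lra.
have : ln (1 + (g - 1)) <= g - 1 by apply: le_ln1Dx; lra.
by rewrite addrC subrK /rate_exponent lnV ?posrE // g_def; lra.
Qed.

Lemma rate_exponent_le : c <= 2 / (q - 1).
Proof.
have g_gt0 := rateD_gt0 lambda_gt0 D_ge1; have q_gt1 := rootD_gt1 lambda_gt0 D_ge1.
have : ln (1 + (g^-1 - 1)) <= g^-1 - 1.
  have ginv_gt0 : 0 < g^-1 by rewrite invr_gt0.
  by apply: le_ln1Dx; lra.
rewrite addrC subrK /rate_exponent.
suff -> : g^-1 - 1 = 2 / (q - 1) by [].
by rewrite /rateD invf_div; field; rewrite gt_eqF //; lra.
Qed.

Lemma lambdaD1_le : 1 + lambda * D%:R <= (1 + lambda) * D%:R.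
Proof.
have : (1 : R) <= D%:R by rewrite ler1n.
lra.
Qed.

Lemma rateD_expr_leaf_gap_le n (eps : R) : 0 < eps -> depth_ratio eps D < n%:R ->
  g ^+ n * L <= eps.
Proof.
move=> eps_gt0; have c_gt0 := rate_exponent_gt0; have L_gt0 := leaf_gap_gt0 lambda_gt0 D_ge1.
have -> : g = expR (- c) by rewrite /rate_exponent lnV ?posrE ?rateD_gt0 // opprK lnK ?posrE ?rateD_gt0.
rewrite -expRM_natl -[L]lnK ?posrE // -expRD -[X in _ <= X]lnK ?posrE // ler_expR.
rewrite /depth_ratio ltr_pdivrMr // lnV ?posrE // => lt_n.
by have := ln_sublinear L_gt0; lra.
Qed.

Lemma hbar_itv (eps : R) : 0 <= depth_ratio eps D ->
  2 * depth_ratio eps D < (hbar eps D)%:R <= 2 * depth_ratio eps D + 2.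
Proof.
move=> a_ge0; have /andP [lb ub] := truncn_itv a_ge0.
move: ub; rewrite /hbar -muln2 natrM !mulrSr => ub.
by apply/andP; split; lra.
Qed.

Lemma hbar_le_bound (eps : R) : 0 < eps -> eps < 2^-1 ->
  (hbar eps D)%:R <= ((Num.sqrt (1 + lambda) + 1) * (2 * ln (1 + lambda) + 3) + 4)
    * sD * ln (eps^-1) * (1 + ln D%:R) ^+ 1.
Proof.
move=> eps_gt0 eps_lt; rewrite expr1.
have c_gt0 := rate_exponent_gt0; have L_gt0 := leaf_gap_gt0 lambda_gt0 D_ge1.
have q_gt1 := rootD_gt1 lambda_gt0 D_ge1; have D_ge1r : 1 <= (D%:R : R) by rewrite ler1n.
set l := ln eps^-1.
have l_ge : 2^-1 <= l.
  have : ln (1 + (eps - 1)) <= eps - 1 by apply: le_ln1Dx; lra.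
  by rewrite addrC subrK /l lnV ?posrE //; lra.
have a_ge0 : 0 <= depth_ratio eps D by rewrite /depth_ratio -/l; apply: divr_ge0; lra.
apply: le_trans (proj2 (andP (hbar_itv a_ge0))) _.
have le_a : 2 * depth_ratio eps D <= (q + 1) * (L + l).
  rewrite /depth_ratio -/l mulrA mulrAC; apply: ler_wpM2r; first lra.
  rewrite ler_pdivrMr // mulrC -ler_pdivrMr; [exact: rate_exponent_ge|lra].
have le_q : q + 1 <= (Num.sqrt (1 + lambda) + 1) * sD.
  rewrite mulrDl mul1r lerD ?(sqrt_natr_ge1 R D_ge1) // /rootD -sqrtrM.
    exact: ler_wsqrtr lambdaD1_le.
  by apply: addr_ge0 => //; exact: ltW.
have le_L : L <= ln (1 + lambda) + ln D%:R.
  have lD1_gt0 : 0 < 1 + lambda * D%:R by have := lambdaD_gt0 lambda_gt0 D_ge1; lra.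
  have l1_gt0 : 0 < 1 + lambda by have := lambda_gt0; lra.
  have D_gt0 : 0 < (D%:R : R) by lra.
  by rewrite /leaf_gap -lnM ?posrE // ler_ln ?posrE ?lambdaD1_le ?mulr_gt0.
have l1_ge0 : 0 <= ln (1 + lambda) by rewrite ln_ge0 //; have := lambda_gt0; lra.
have lD_ge0 : 0 <= ln (D%:R : R) by rewrite ln_ge0.
apply: le_trans (hbar_bound_arith (sqrtr_ge0 _) l1_ge0 lD_ge0 (sqrt_natr_ge1 R D_ge1) l_ge).
by rewrite lerD2r; apply: le_trans le_a _; apply: ler_pM; lra.
Qed.


Lemma hbar_div_ln_dist (eps : R) : 0 < ln eps^-1 ->
  `|(hbar eps D)%:R / ln eps^-1 - 2 / c| <= (2 * L / c + 2) / ln eps^-1.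
Proof.
set l := ln eps^-1 => l_gt0.
have c_gt0 := rate_exponent_gt0.
have Lc_ge0 : 0 <= L / c by rewrite divr_ge0 // ltW // leaf_gap_gt0.
have a_def : depth_ratio eps D = L / c + l / c by rewrite /depth_ratio mulrDl.
have a_ge0 : 0 <= depth_ratio eps D by rewrite a_def addr_ge0 // divr_ge0 // ltW.
have /andP [lo hi] := hbar_itv a_ge0; rewrite a_def in lo hi.
set H := (hbar eps D)%:R in lo hi *.
have -> : H / l - 2 / c = (H - 2 * (l / c)) / l by field; rewrite !gt_eqF.
rewrite ger0_norm; last by apply: divr_ge0; lra.
by rewrite ler_pM2r ?invr_gt0 //; lra.
Qed.

Lemma hbar_div_ln_cvg :
  (fun eps : R => (hbar eps D)%:R / ln (eps^-1)) @ (0:R)^'+ --> 2 / c.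
Proof.
have c_gt0 := rate_exponent_gt0.
have Lc_ge0 : 0 <= L / c by rewrite divr_ge0 // ltW // leaf_gap_gt0.
set K := 2 * L / c + 2.
apply/cvgrPdist_le => e e_gt0.
have K_gt0 : 0 < K by rewrite /K; lra.
have Ke_gt0 : 0 < K / e by exact: divr_gt0.
near=> eps.
have eps_gt0 : 0 < eps by near: eps; exact: nbhs_right_gt.
have eps_lt : eps < expR (- (K / e)) by near: eps; apply: nbhs_right_lt; exact: expR_gt0.
have l_gt : K / e < ln eps^-1.
  by rewrite lnV ?posrE // ltrNr -[X in _ < X]expRK ltr_ln ?posrE ?expR_gt0.
have l_gt0 : 0 < ln eps^-1 by apply: lt_trans l_gt.
rewrite distrC; apply: le_trans (hbar_div_ln_dist l_gt0) _.
by rewrite -/K ler_pdivrMr // mulrC -ler_pdivrMr // ltW.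
Unshelve. all: by end_near.
Qed.

Lemma sqrt_lambda_dist :
  `|Num.sqrt lambda - 2 / c / sD| <= (1 + (Num.sqrt lambda)^-1) / sD.
Proof.
have c_gt0 := rate_exponent_gt0; have q_gt1 := rootD_gt1 lambda_gt0 D_ge1.
have sD_ge1 := sqrt_natr_ge1 R D_ge1.
set s := Num.sqrt lambda.
have s_gt0 : 0 < s by rewrite sqrtr_gt0.
have two_c_le : 2 / c <= q + 1.
  have := rate_exponent_ge; rewrite ler_pdivrMr; last lra.
  by move=> ?; rewrite ler_pdivrMr // mulrC.
have two_c_ge : q - 1 <= 2 / c.
  have := rate_exponent_le; rewrite ler_pdivlMr; last lra.
  by move=> ?; rewrite ler_pdivlMr // mulrC.
(* [q = sqrt (1 + s^2 D)] lies within [1/s] of [s * sqrt D]. *)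
have ssD_sqr : (s * sD) ^+ 2 = lambda * D%:R by rewrite exprMn !sqr_sqrtr ?ler0n ?ltW.
have q_sqr := rootD_sqr lambda_gt0 D_ge1.
have ssD_gt0 : 0 < s * sD by rewrite mulr_gt0 //; lra.
have q_ge : s * sD <= q.
  by rewrite -(ler_pXn2r (n := 2)) ?nnegrE ?ssD_sqr ?q_sqr //; lra.
have q_le : q - s * sD <= s^-1.
  have prod1 : (q - s * sD) * (q + s * sD) = 1.
    by rewrite -subr_sqr q_sqr ssD_sqr addrK.
  have le_s : s <= s * sD by rewrite ler_peMr // ltW.
  by rewrite -(ler_pM2r s_gt0) mulVf ?gt_eqF // -[X in _ <= X]prod1; apply: ler_wpM2l; lra.
have -> : s - 2 / c / sD = - ((2 / c - s * sD) / sD) by field; rewrite gt_eqF //; lra.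
rewrite normrN normrM [`|sD^-1|]gtr0_norm ?invr_gt0; last lra.
rewrite ler_pM2r ?invr_gt0; last lra.
have sinv_ge0 : 0 <= s^-1 by rewrite invr_ge0 ltW.
by rewrite ler_norml; apply/andP; split; lra.
Qed.

End FixedDegree.

Lemma two_div_rate_exponent_cvg :
  (fun D : nat => 2 / rate_exponent D / Num.sqrt D%:R) @ \oo --> Num.sqrt lambda.
Proof.
apply/cvgrPdist_le => e e_gt0.
set s := Num.sqrt lambda.
have K_gt0 : 0 < 1 + s^-1 by rewrite ltr_pwDl // invr_ge0 sqrtr_ge0.
exists (Num.truncn (((1 + s^-1) / e) ^+ 2)).+1 => // D /= le_D.
have D_ge1 : (1 <= D)%N by apply: leq_trans le_D.
apply: le_trans (sqrt_lambda_dist D_ge1) _.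
have sD_gt0 : 0 < Num.sqrt (D%:R : R) by rewrite sqrtr_gt0 ltr0n.
rewrite ler_pdivrMr // mulrC -ler_pdivrMr //.
rewrite -[X in X <= _]ger0_norm; last by apply: divr_ge0; exact: ltW.
rewrite -sqrtr_sqr ler_wsqrtr //.
apply: ltW; apply: lt_le_trans (truncnS_gt _) _.
by rewrite ler_nat.
Qed.

Lemma hbar_correct (V E : finType) (ends : E -> V * V) (D : nat) (eps : R) (v : V) (h : nat) :
  (1 <= D)%N -> max_degree_le ends D -> 0 < eps -> (hbar eps D <= h)%N ->
  `|ln (x_root ends lambda h v) - ln (p_uncov ends lambda v)| <= eps.
Proof.
move=> D_ge1 deg_le eps_gt0 le_h.
rewrite (@p_uncov_xrec V E ends R lambda lambda_gt0 v (h + #|V|.+1)); last first.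
  by rewrite addnS ltnS leq_addl.
apply: le_trans (xrec_ln_dist lambda_gt0 D_ge1 deg_le h #|V|.+1 v [set v]) _.
apply: rateD_expr_leaf_gap_le => //; apply: lt_le_trans (truncnS_gt _) _.
by rewrite ler_nat -(doubleK (Num.truncn _).+1) half_leq.
Qed.

End TruncationDepth.

Unset Implicit Arguments.
Set Strict Implicit.

Theorem lemma1 (R : realType) (lambda : R) (hlambda : 0 < lambda) :
  exists hbar : R -> nat -> nat,
    (* correctness of the truncation depth *)
    (forall (eps : R) (D : nat), 0 < eps -> (1 <= D)%N ->
      forall (V E : finType) (ends : E -> V * V),
        max_degree_le ends D ->
        forall (v : V) (h : nat), (1 <= h)%N -> (hbar eps D <= h)%N ->
          `| ln (x_root ends lambda h v) - ln (p_uncov ends lambda v) | <= eps)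
    (* hbar = O~(sqrt D * log (1/eps)) : polylog factors in D hidden *)
    /\ (exists (C : R) (k : nat), 0 < C /\
         forall (eps : R) (D : nat), 0 < eps -> eps < 2^-1 -> (1 <= D)%N ->
           (hbar eps D)%:R <= C * Num.sqrt D%:R * ln (eps^-1) * (1 + ln D%:R) ^+ k)
    (* lim_{D -> oo} (1/sqrt D) lim_{eps -> 0+} hbar eps D / log(1/eps) = sqrt lambda *)
    /\ (exists L : nat -> R,
         (forall D : nat, (1 <= D)%N ->
            (fun eps : R => (hbar eps D)%:R / ln (eps^-1)) @ (0:R)^'+ --> L D)
         /\ ((fun D : nat => L D / Num.sqrt D%:R) @ \oo --> Num.sqrt lambda)).
Proof.
exists (hbar lambda); split.
  move=> eps D eps_gt0 D_ge1 V E ends deg_le v h _.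
  exact: hbar_correct.
split.
  exists ((Num.sqrt (1 + lambda) + 1) * (2 * ln (1 + lambda) + 3) + 4), 1%N; split.
    have : 0 <= ln (1 + lambda) by rewrite ln_ge0 // lerDl ltW.
    by have : 0 <= Num.sqrt (1 + lambda) := sqrtr_ge0 _; nra.
  by move=> eps D eps_gt0 eps_lt D_ge1; apply: hbar_le_bound.
exists (fun D => 2 / rate_exponent lambda D); split.
  by move=> D D_ge1; apply: hbar_div_ln_cvg.
exact: two_div_rate_exponent_cvg.
Qed.
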